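(* Let $G=(V,E)$ be a strongly biconnected directed graph, let $t\ge 1$, and let $w_0,w_1,\ldots,w_t$ be pairwise distinct vertices of $G$ such that $w_0 \overset{e}{\leftrightsquigarrow} w_t$ and $w_{i-1} \overset{e}{\leftrightsquigarrow} w_i$ for every $i\in\{1,2,\ldots,t\}$. Then $\{w_0,w_1,\ldots,w_t\}$ is contained in some $2$-edge-biconnected block of $G$.
   Context: All graphs are finite. A directed graph $H$ is strongly biconnected if $H$ is strongly connected and its underlying undirected graph is biconnected. A strongly biconnected component of a directed graph $H=(W,F)$ is a maximal vertex subset $C\subseteq W$ such that the induced subgraph $H[C]$ is strongly biconnected. For a strongly biconnected directed graph $G=(V,E)$ and an edge $b\in E$, $G\setminus\{b\}=(V,E\setminus\{b\})$. For distinct $x,y\in V$, write $x \overset{e}{\leftrightsquigarrow} y$ if for every edge $b\in E$ there is a strongly biconnected component of $G\setminus\{b\}$ containing both $x$ and $y$. A $2$-edge-biconnected block of $G$ is a maximal vertex subset $U\subseteq V$ with $|U|>1$ such that $x \overset{e}{\leftrightsquigarrow} y$ for all distinct $x,y\in U$. *)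

(* A finite directed graph is a finType V of vertices
   together with an edge set E : {set V * V} (edge (x,y) goes from x to y). *)
From mathcomp Require Import all_boot.
Set Implicit Arguments. Unset Strict Implicit. Unset Printing Implicit Defensive.

Section Graphs.
Variable V : finType.

Definition dadj (F : {set V * V}) (C : {set V}) : rel V :=
  fun a b => [&& (a, b) \in F, a \in C & b \in C].

Definition uadj (F : {set V * V}) (C : {set V}) : rel V :=
  fun a b => [&& ((a, b) \in F) || ((b, a) \in F), a \in C & b \in C].

Definition strongly_connected (F : {set V * V}) (C : {set V}) : Prop :=
  forall x y, x \in C -> y \in C -> connect (dadj F C) x y.

Definition uconnected (F : {set V * V}) (C : {set V}) : Prop :=
  forall x y, x \in C -> y \in C -> connect (uadj F C) x y.

Definition ubiconnected (F : {set V * V}) (C : {set V}) : Prop :=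
  uconnected F C /\ forall v, v \in C -> uconnected F (C :\ v).

Definition strongly_biconnected (F : {set V * V}) (C : {set V}) : Prop :=
  strongly_connected F C /\ ubiconnected F C.

Definition sb_component (F : {set V * V}) (C : {set V}) : Prop :=
  strongly_biconnected F C /\
  forall D : {set V}, C \subset D -> strongly_biconnected F D -> D = C.

Definition e_rel (E : {set V * V}) (x y : V) : Prop :=
  forall b, b \in E ->
    exists C : {set V}, [/\ sb_component (E :\ b) C, x \in C & y \in C].

Definition two_edge_biconnected_set (E : {set V * V}) (U : {set V}) : Prop :=
  1 < #|U| /\ forall x y, x \in U -> y \in U -> x != y -> e_rel E x y.

Definition two_edge_biconnected_block (E : {set V * V}) (U : {set V}) : Prop :=
  two_edge_biconnected_set E U /\
  forall U' : {set V}, U \subset U' -> two_edge_biconnected_set E U' -> U' = U.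

End Graphs.

(* Fix an edge b.  The hypotheses give strongly biconnected components
   C_0 ∋ w_0, w_t and C_i ∋ w_(i-1), w_i (1 <= i <= t) of G \ b.  These sets
   form a closed chain whose consecutive members are glued at the pairwise
   distinct vertices w_0, ..., w_t.  The heart of the proof is that the union
   D of such a chain is again strongly biconnected: it is strongly connected
   because every C_i is and the gluing vertices link them, and removing one
   vertex v cuts at most one of the t+1 gluing points, so every remaining
   vertex still reaches w_0 or w_t, which are themselves linked inside C_0.
   By maximality of the component C_0 we get D = C_0, hence every w_k lies in
   the component of G \ b containing w_0.  Thus any two of the w_k are
   e-related, i.e. {w_0, ..., w_t} is a 2-edge-biconnected set, and it
   extends to a maximal one, a block, since V is finite. *)

From Stdlib Require Import Classical.
From mathcomp Require Import all_boot.
From mathcomp Require Import zify.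

Set Implicit Arguments. Unset Strict Implicit. Unset Printing Implicit Defensive.

Section InducedConnectivity.
Variables (V : finType) (F : {set V * V}).

Lemma connect_dadj_sub (C D : {set V}) x y : C \subset D ->
  connect (dadj F C) x y -> connect (dadj F D) x y.
Proof.
move=> sCD; apply: connect_sub x y => a b /and3P[ab aC bC]; apply: connect1.
by rewrite /dadj ab (subsetP sCD _ aC) (subsetP sCD _ bC).
Qed.

Lemma connect_uadj_sub (C D : {set V}) x y : C \subset D ->
  connect (uadj F C) x y -> connect (uadj F D) x y.
Proof.
move=> sCD; apply: connect_sub x y => a b /and3P[ab aC bC]; apply: connect1.
by rewrite /uadj ab (subsetP sCD _ aC) (subsetP sCD _ bC).
Qed.

Lemma strongly_connected_uconnected (C : {set V}) :
  strongly_connected F C -> uconnected F C.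
Proof.
move=> scC x y xC yC; apply: connect_sub (scC x y xC yC) => a b /and3P[ab aC bC].
by apply: connect1; rewrite /uadj ab aC bC.
Qed.

Lemma uadj_connect_sym (C : {set V}) : connect_sym (uadj F C).
Proof.
apply: sym_connect_sym => a b; rewrite /uadj orbC.
by congr (_ && _); apply: andbC.
Qed.

End InducedConnectivity.

Section ChainUnion.
Variables (V : finType) (F : {set V * V}) (t : nat).
Variables (w : nat -> V) (C : nat -> {set V}).
Hypothesis t_gt0 : 1 <= t.
Hypothesis C_sb : forall i, i <= t -> strongly_biconnected F (C i).
Hypothesis w0_C0 : w 0 \in C 0.
Hypothesis wt_C0 : w t \in C 0.
Hypothesis w_glue : forall i, 1 <= i <= t -> w i.-1 \in C i /\ w i \in C i.
Hypothesis w_inj : forall i j, i <= t -> j <= t -> w i = w j -> i = j.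

Definition chain_union : {set V} := \bigcup_(i < t.+1) C i.

Lemma chain_union_sub i : i <= t -> C i \subset chain_union.
Proof.
by move=> it; apply/subsetP=> x xC; apply/bigcupP; exists (Ordinal (n := t.+1) it).
Qed.

Lemma chain_unionP x : x \in chain_union -> exists2 i, i <= t & x \in C i.
Proof. by case/bigcupP=> i _ xC; exists (val i); first exact: (ltn_ord i). Qed.

Lemma w_glue_succ k : k < t -> w k \in C k.+1 /\ w k.+1 \in C k.+1.
Proof. exact: (w_glue (i := k.+1)). Qed.

Lemma w_in_C k : k <= t -> w k \in C k.
Proof. by case: k => [|k] kt //; case: (w_glue_succ kt). Qed.

Lemma w0_linked k : k <= t ->
  connect (dadj F chain_union) (w 0) (w k) /\
  connect (dadj F chain_union) (w k) (w 0).
Proof.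
elim: k => [|k IH] kt; first by split; apply: connect0.
have [to_k from_k] := IH (ltnW kt).
have [wk_C wk1_C] := w_glue_succ kt.
have [scC _] := C_sb kt.
have inC x y : x \in C k.+1 -> y \in C k.+1 -> connect (dadj F chain_union) x y.
  by move=> xC yC; apply: connect_dadj_sub (chain_union_sub kt) (scC x y xC yC).
by split; [apply: connect_trans to_k (inC _ _ _ _) | apply: connect_trans (inC _ _ _ _) from_k].
Qed.

(* Any two vertices of the union are linked through w_0. *)
Lemma chain_union_strongly_connected : strongly_connected F chain_union.
Proof.
move=> x y /chain_unionP[i it xC] /chain_unionP[j jt yC].
have [scCi _] := C_sb it; have [scCj _] := C_sb jt.
apply: (@connect_trans _ _ (w i)).
  exact: connect_dadj_sub (chain_union_sub it) (scCi _ _ xC (w_in_C it)).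
apply: (@connect_trans _ _ (w 0)); first by case: (w0_linked it).
apply: (@connect_trans _ _ (w j)); first by case: (w0_linked jt).
exact: connect_dadj_sub (chain_union_sub jt) (scCj _ _ (w_in_C jt) yC).
Qed.

Section RemoveVertex.
Variable v : V.
Local Notation linked := (connect (uadj F (chain_union :\ v))).

(* Two vertices of one C_i other than v stay linked after removing v:
   either v lies in C_i, which has no articulation point, or C_i is
   untouched. *)
Lemma linked_in_C i x y : i <= t -> x \in C i -> y \in C i ->
  x != v -> y != v -> linked x y.
Proof.
move=> it xC yC xv yv; have [scC [_ noart]] := C_sb it.
have [vC | vNC] := boolP (v \in C i).
  apply: connect_uadj_sub (setSD _ (chain_union_sub it)) _.
  by apply: noart; rewrite // in_setD1 ?xv ?yv.
apply: (connect_uadj_sub _ (strongly_connected_uconnected scC xC yC)).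
apply/subsetP=> z zC; rewrite in_setD1 (subsetP (chain_union_sub it) _ zC) andbT.
by apply: contraNneq vNC => <-.
Qed.

Lemma linked_prefix k : k <= t -> (forall i, i <= k -> w i != v) ->
  linked (w 0) (w k).
Proof.
elim: k => [|k IH] kt wv; first exact: connect0.
apply: connect_trans (IH (ltnW kt) (fun i ik => wv i (leqW ik))) _.
have [wk_C wk1_C] := w_glue_succ kt.
exact: linked_in_C kt wk_C wk1_C (wv _ (leqnSn k)) (wv _ (leqnn _)).
Qed.

Lemma linked_suffix d k : k + d = t -> (forall i, k <= i <= t -> w i != v) ->
  linked (w k) (w t).
Proof.
elim: d k => [|d IH] k kdt wv; first by rewrite -kdt addn0; apply: connect0.
have k_lt_t : k < t by lia.
apply: connect_trans (IH k.+1 _ _); [|lia|by move=> i ikt; apply: wv; lia].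
have [wk_C wk1_C] := w_glue_succ k_lt_t.
by apply: linked_in_C k_lt_t wk_C wk1_C (wv _ _) (wv _ _); lia.
Qed.

(* Since v is at most one of the w_i, every w_k other than v is linked to an
   endpoint w_0 or w_t that is itself different from v. *)
Lemma linked_to_endpoint k : k <= t -> w k != v ->
  (w 0 != v /\ linked (w k) (w 0)) \/ (w t != v /\ linked (w k) (w t)).
Proof.
move=> kt wkv.
have [/existsP[i /eqP wiv] | /existsPn before_k] := boolP [exists i : 'I_k.+1, w i == v].
  have after_k j : k <= j <= t -> w j != v.
    case/andP=> kj jt; apply: contra_neq wkv => wjv.
    have ik : i <= k by rewrite -ltnS.
    have ij := w_inj (leq_trans ik kt) jt (etrans wiv (esym wjv)).
    by have -> : k = j by lia.
  right; split; first by apply: after_k; rewrite kt leqnn.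
  by apply: (@linked_suffix (t - k)); first lia.
have before j : j <= k -> w j != v by move=> jk; exact: (before_k (Ordinal (n := k.+1) jk)).
by left; split; [apply: before | rewrite uadj_connect_sym; apply: linked_prefix].
Qed.

(* Each C_i contains some w_k different from v, as it contains two distinct w's. *)
Lemma C_has_w_avoiding i : i <= t -> exists2 k, k <= t & (w k \in C i) && (w k != v).
Proof.
move=> it.
suff two a b : a <= t -> b <= t -> a != b -> w a \in C i -> w b \in C i ->
    exists2 k, k <= t & (w k \in C i) && (w k != v).
  move: two; case: i it => [|i] it two; first by apply: (two 0 t) => //; rewrite eq_sym -lt0n.
  have [wi_C wi1_C] := w_glue_succ it.
  by apply: (two i i.+1) => //; [exact: ltnW | rewrite neq_ltn ltnSn].
move=> at_ bt ab waC wbC.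
have [wav | wav] := eqVneq (w a) v; last by exists a; rewrite ?waC.
exists b; rewrite // wbC; apply: contra_neq ab => wbv.
by apply: w_inj; rewrite // wav wbv.
Qed.

Lemma linked_from_union x : x \in chain_union :\ v ->
  (w 0 != v /\ linked x (w 0)) \/ (w t != v /\ linked x (w t)).
Proof.
rewrite in_setD1 => /andP[xv /chain_unionP[i it xC]].
have [k kt /andP[wkC wkv]] := C_has_w_avoiding it.
have x_wk := linked_in_C it xC wkC xv wkv.
by case: (linked_to_endpoint kt wkv) => -[nv wk_end]; [left | right];
  split=> //; apply: connect_trans x_wk wk_end.
Qed.

(* The endpoints w_0, w_t are linked inside C_0, so removing v from the
   union leaves it connected. *)
Lemma chain_union_minus_uconnected : uconnected F (chain_union :\ v).
Proof.
move=> x y xD yD.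
have ends : w 0 != v -> w t != v -> linked (w 0) (w t).
  exact: linked_in_C (leq0n t) w0_C0 wt_C0.
have y_ends : (w 0 != v /\ linked (w 0) y) \/ (w t != v /\ linked (w t) y).
  by rewrite !(uadj_connect_sym _ _ _ y); apply: linked_from_union.
have [[n0 x0] | [nt xt]] := linked_from_union xD;
  case: y_ends => -[nv y_end]; apply: connect_trans _ y_end.
- exact: x0.
- exact: connect_trans x0 (ends n0 nv).
- by apply: connect_trans xt _; rewrite uadj_connect_sym; apply: ends.
- exact: xt.
Qed.

End RemoveVertex.

Lemma chain_union_strongly_biconnected : strongly_biconnected F chain_union.
Proof.
have scD := chain_union_strongly_connected.
split=> //; split; first exact: strongly_connected_uconnected.
by move=> v _; apply: chain_union_minus_uconnected.
Qed.

End ChainUnion.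

Lemma finite_choice (T : Type) (x0 : T) (P : nat -> T -> Prop) n :
  (forall i, i <= n -> exists x, P i x) ->
  exists f : nat -> T, forall i, i <= n -> P i (f i).
Proof.
elim: n => [|n IH] exP.
  by have [x Px] := exP 0 (leqnn 0); exists (fun=> x) => -[].
have [f Pf] := IH (fun i i_n => exP i (leqW i_n)).
have [x Px] := exP n.+1 (leqnn _).
exists (fun i => if i == n.+1 then x else f i) => i; rewrite leq_eqVlt.
by case: eqP => [-> | _ /= ilt]; last exact: Pf.
Qed.

Lemma maximal_extension (V : finType) (P : {set V} -> Prop) (U0 : {set V}) :
  P U0 -> exists U : {set V}, [/\ U0 \subset U, P U &
    forall U' : {set V}, U \subset U' -> P U' -> U' = U].
Proof.
move: {2}(#|V| - #|U0|) (leqnn (#|V| - #|U0|)) => n.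
elim: n U0 => [|n IH] U0 room PU0.
  exists U0; split=> // U' sU0U' _; apply/esym/eqP; rewrite eqEcard sU0U' /=.
  by have : #|U'| <= #|V| := max_card _; lia.
have [[U' [sU0U' PU' neU']] | no_ext] :=
  classic (exists U' : {set V}, [/\ U0 \subset U', P U' & U' != U0]).
  have ltU0U' : #|U0| < #|U'| by rewrite proper_card // properEneq sU0U' eq_sym neU'.
  have U'V : #|U'| <= #|V| := max_card _.
  have [U [sU'U PU maxU]] := IH U' ltac:(lia) PU'.
  by exists U; split=> //; apply: subset_trans sU'U.
exists U0; split=> // U' sU0U' PU'; apply/eqP/negPn/negP => neU'.
by apply: no_ext; exists U'.
Qed.

(* If w_0, ..., w_t are pairwise distinct, w_0 and w_t share a strongly
   biconnected component C_0 of (V, F), and each consecutive pair shares one,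
   then C_0 contains the whole chain: the union of the components is
   strongly biconnected and contains C_0, so it equals C_0 by maximality. *)
Lemma sb_component_contains_chain (V : finType) (F : {set V * V}) t (w : nat -> V)
    (C0 : {set V}) :
  1 <= t -> (forall i j, i <= t -> j <= t -> w i = w j -> i = j) ->
  sb_component F C0 -> w 0 \in C0 -> w t \in C0 ->
  (forall i, 1 <= i <= t ->
     exists Ci : {set V}, [/\ sb_component F Ci, w i.-1 \in Ci & w i \in Ci]) ->
  forall k, k <= t -> w k \in C0.
Proof.
move=> t_gt0 w_inj [C0_sb C0_max] w0_C0 wt_C0 exC.
pose good i (Ci : {set V}) :=
  if i is 0 then Ci = C0 else [/\ sb_component F Ci, w i.-1 \in Ci & w i \in Ci].
have [C C_good] : exists C : nat -> {set V}, forall i, i <= t -> good i (C i).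
  by apply: (finite_choice set0) => -[|i] it; [exists C0 | apply: exC].
have C0E : C 0 = C0 := C_good 0 (leq0n t).
have C_sb i : i <= t -> strongly_biconnected F (C i).
  by case: i => [|i] /C_good; [move->| case=> -[]].
have w_glue i : 1 <= i <= t -> w i.-1 \in C i /\ w i \in C i.
  by case: i => [|i] // /andP[_ /C_good[]].
rewrite -C0E in w0_C0 wt_C0.
have D_sb := chain_union_strongly_biconnected t_gt0 C_sb w0_C0 wt_C0 w_glue w_inj.
have DE : chain_union t C = C0.
  by apply: C0_max D_sb; rewrite -C0E; exact: chain_union_sub.
move=> k kt; rewrite -DE; apply: (subsetP (chain_union_sub C kt)).
exact: (w_in_C w0_C0 w_glue kt).
Qed.

Theorem mainTheorem3 (V : finType) (E : {set V * V}) (t : nat) (w : nat -> V) :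
  strongly_biconnected E [set: V] ->
  1 <= t ->
  (forall i j, i <= t -> j <= t -> w i = w j -> i = j) ->
  e_rel E (w 0) (w t) ->
  (forall i, 1 <= i <= t -> e_rel E (w i.-1) (w i)) ->
  exists U : {set V}, two_edge_biconnected_block E U /\
    forall i, i <= t -> w i \in U.
Proof.
move=> _ t_gt0 w_inj w0_wt w_steps.
pose W := [set w (val i) | i : 'I_t.+1].
have W_w k : k <= t -> w k \in W by move=> kt; apply/imsetP; exists (Ordinal (n := t.+1) kt).
have W_set : two_edge_biconnected_set E W.
  split.
    apply/card_gt1P; exists (w 0), (w t); rewrite !W_w //; split=> //.
    by apply/eqP=> /(w_inj 0 t (leq0n t) (leqnn t)); lia.
  move=> _ _ /imsetP[i _ ->] /imsetP[j _ ->] _ b bE.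
  have [C0 [C0_sb w0_C0 wt_C0]] := w0_wt b bE.
  have chain := sb_component_contains_chain t_gt0 w_inj C0_sb w0_C0 wt_C0
    (fun k kt => w_steps k kt b bE).
  by exists C0; split=> //; apply: chain; rewrite -ltnS ltn_ord.
have [U [sWU U_set U_max]] := maximal_extension W_set.
exists U; split; first by split.
by move=> k kt; apply: (subsetP sWU); apply: W_w.
Qed.
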